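(* In the errorless symmetric relay network described in the context, for every policy $\pi$ and every time slot $t\ge1$, \[ \sum_{\tau=1}^{t-1}R(\mathcal{S}^{\pi}(\tau))\ \ge\ \sum_{\tau=1}^{t}R(\mathcal{U}^{\pi}(\tau)). \]
   Context: Fix integers $K\ge 2$ and $S,U$ with $1\le S<K$, $1\le U<K$, and $S=U$. There are $K$ processes indexed by $k\in\{1,\dots,K\}$ and time slots $t=1,2,\dots$. The state at time $t$ consists of relay AoI values $g_k(t)$ and destination AoI values $h_k(t)$, with $g_k(1)=h_k(1)=1$ for all $k$. A policy $\pi$ is a map assigning to the current state a pair $(\mathcal{S}^{\pi}(t),\mathcal{U}^{\pi}(t))$ of subsets of $\{1,\dots,K\}$ with $|\mathcal{S}^{\pi}(t)|=S$ and $|\mathcal{U}^{\pi}(t)|=U$. Errorless dynamics: $g_k(t+1)=1$ if $k\in\mathcal{S}(t)$, else $g_k(t+1)=g_k(t)+1$; $h_k(t+1)=g_k(t)+1$ if $k\in\mathcal{U}(t)$, else $h_k(t+1)=h_k(t)+1$. Write $g_k^\pi(t),h_k^\pi(t)$ for the sequences under $\pi$. Define $R(\mathcal{S}^{\pi}(\tau))=\sum_{k\in\mathcal{S}^{\pi}(\tau)} g_k^{\pi}(\tau)$ and $R(\mathcal{U}^{\pi}(\tau))=\sum_{k\in\mathcal{U}^{\pi}(\tau)}(h_k^{\pi}(\tau)-g_k^{\pi}(\tau))$; empty sums are $0$. *)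

From mathcomp Require Import all_boot all_order all_algebra.
Set Implicit Arguments. Unset Strict Implicit. Unset Printing Implicit Defensive.
Import GRing.Theory Num.Theory.

(* Processes are indexed by 'I_K (process k+1 of the paper is ordinal k). *)
(* A state is the pair (g, h) of relay and destination AoI vectors. *)
Definition state (K : nat) : Type :=
  ({ffun 'I_K -> nat} * {ffun 'I_K -> nat})%type.

Definition policy (K : nat) : Type := state K -> ({set 'I_K} * {set 'I_K})%type.

Definition init_state (K : nat) : state K := ([ffun _ => 1%N], [ffun _ => 1%N]).

Definition step (K : nat) (x : state K) (d : {set 'I_K} * {set 'I_K}) : state K :=
  ([ffun k => if k \in d.1 then 1%N else (x.1 k).+1],
   [ffun k => if k \in d.2 then (x.1 k).+1 else (x.2 k).+1]).

(* state_at pi n = state at time slot n+1 *)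
Fixpoint state_at (K : nat) (pi : policy K) (n : nat) : state K :=
  match n with
  | 0 => init_state K
  | n'.+1 => step (state_at pi n') (pi (state_at pi n'))
  end.

(* Quantities at time slot t >= 1 (paper indexing). *)
Definition gAoI K (pi : policy K) (t : nat) (k : 'I_K) : nat := (state_at pi t.-1).1 k.
Definition hAoI K (pi : policy K) (t : nat) (k : 'I_K) : nat := (state_at pi t.-1).2 k.
Definition Sdec K (pi : policy K) (t : nat) : {set 'I_K} := (pi (state_at pi t.-1)).1.
Definition Udec K (pi : policy K) (t : nat) : {set 'I_K} := (pi (state_at pi t.-1)).2.

Definition RS K (pi : policy K) (t : nat) : int :=
  (\sum_(k in Sdec pi t) ((gAoI pi t k)%:Z))%R.
Definition RU K (pi : policy K) (t : nat) : int :=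
  (\sum_(k in Udec pi t) ((hAoI pi t k)%:Z - (gAoI pi t k)%:Z))%R.

(* The quantity driving the argument is the total gap G(t) = sum_k (h_k(t) - g_k(t)),
   which starts at 0 and is nonnegative because a destination never holds
   fresher information than its relay.  In one slot, an update wipes out the
   gap of every k in U(t), and a sample of k in S(t) opens a gap of exactly
   g_k(t); hence G(t+1) = G(t) - R(U(t)) + R(S(t)).  Telescoping gives
   sum_{tau<t} R(S(tau)) - sum_{tau<t} R(U(tau)) = G(t) >= R(U(t)). *)
From mathcomp Require Import all_boot all_order all_algebra.
From mathcomp Require Import zify ring lra.
Import GRing.Theory Num.Theory.
Set Implicit Arguments.

Local Open Scope ring_scope.

Definition aoi_gap K (x : state K) (k : 'I_K) : int := (x.2 k)%:Z - (x.1 k)%:Z.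

Lemma aoi_gap_step K (x : state K) (d : {set 'I_K} * {set 'I_K}) k :
  aoi_gap (step x d) k =
  (if k \in d.2 then 0 else aoi_gap x k) + (if k \in d.1 then (x.1 k)%:Z else 0).
Proof. by rewrite /aoi_gap !ffunE; do 2!case: ifP => _; rewrite ?PoszD; ring. Qed.

Lemma sum_aoi_gap_step K (x : state K) (d : {set 'I_K} * {set 'I_K}) :
  \sum_k aoi_gap (step x d) k =
  \sum_k aoi_gap x k - \sum_(k in d.2) aoi_gap x k + \sum_(k in d.1) (x.1 k)%:Z.
Proof.
rewrite (eq_bigr _ (fun k _ => aoi_gap_step x d k)) big_split /= -big_mkcond /=.
rewrite [\sum_k aoi_gap x k](bigID (mem d.2)) [\sum_k (if _ then _ else _)](bigID (mem d.2)) /=.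
rewrite big1 => [|k ->] //; rewrite (eq_bigr (aoi_gap x)) => [|k /negbTE ->] //.
ring.
Qed.

Lemma relay_le_dest_state_at K (pi : policy K) n k :
  ((state_at pi n).1 k <= (state_at pi n).2 k)%N.
Proof.
elim: n => [|n IHn] /=; first by rewrite !ffunE.
by rewrite !ffunE; do 2!case: ifP => _; lia.
Qed.

Lemma aoi_gap_state_at_ge0 K (pi : policy K) n k : 0 <= aoi_gap (state_at pi n) k.
Proof. by rewrite subr_ge0 lez_nat relay_le_dest_state_at. Qed.

Lemma sum_aoi_gap_state_at K (pi : policy K) n :
  \sum_k aoi_gap (state_at pi n) k =
  \sum_(1 <= tau < n.+1) RS pi tau - \sum_(1 <= tau < n.+1) RU pi tau.
Proof.
elim: n => [|n IHn].
  by rewrite !big_geq // big1 // => k _; rewrite /aoi_gap !ffunE subrr.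
rewrite [state_at _ _]/= sum_aoi_gap_step IHn !(@big_nat_recr _ _ _ n.+1 1) //=.
rewrite /RS /RU /Sdec /Udec /gAoI /hAoI /=; ring.
Qed.

Lemma RU_le_sum_aoi_gap K (pi : policy K) n :
  RU pi n.+1 <= \sum_k aoi_gap (state_at pi n) k.
Proof.
rewrite [leRHS](bigID (mem (Udec pi n.+1))) /=.
apply: ler_wpDr => //.
by apply: sumr_ge0 => k _; apply: aoi_gap_state_at_ge0.
Qed.

Theorem proposition1 (K S U : nat) (pi : policy K) (t : nat) :
  (2 <= K)%N -> (1 <= S)%N -> (S < K)%N -> (1 <= U)%N -> (U < K)%N -> S = U ->
  (forall x : state K, #|(pi x).1| = S /\ #|(pi x).2| = U) ->
  (1 <= t)%N ->
  ((\sum_(1 <= tau < t) RS pi tau) >= \sum_(1 <= tau < t.+1) RU pi tau)%R.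
Proof.
move=> _ _ _ _ _ _ _; case: t => // n _.
have := RU_le_sum_aoi_gap pi n; rewrite sum_aoi_gap_state_at.
by rewrite (@big_nat_recr _ _ _ n.+1 1) //=; lra.
Qed.
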